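(* Let $q$ be a prime power, let $k\ge1$, $n=2k$, and let $t\ge0$ be an even integer. Let $\delta\in\mathbb{F}_{q^n}$ satisfy $\delta^{q^k}=-\delta$, and let $L(x)=\sum_i a_i x^{q^i}$ be a $q$-polynomial with all coefficients $a_i\in\mathbb{F}_{q^k}$. Then $f(x)=(x^{q^k}-x+\delta)^t+L(x)$ is a permutation polynomial of $\mathbb{F}_{q^n}$ if and only if $L(x)$ is a permutation polynomial of $\mathbb{F}_{q^n}$.
   Context: A polynomial is a permutation polynomial of $\mathbb{F}_{q^n}$ if it induces a bijection of $\mathbb{F}_{q^n}$. *)

From mathcomp Require Import all_boot all_order all_algebra all_field.
Set Implicit Arguments. Unset Strict Implicit. Unset Printing Implicit Defensive.
Import GRing.Theory.
Local Open Scope ring_scope.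

Definition prime_power (q : nat) : Prop :=
  exists p e : nat, prime p /\ (0 < e)%N /\ q = (p ^ e)%N.

Definition qpoly_eval (F : nzRingType) (q : nat) (a : seq F) (x : F) : F :=
  \sum_(i < size a) a`_i * x ^+ (q ^ i).

Definition is_perm_map (F : finFieldType) (f : F -> F) : Prop := bijective f.

(* Write [T x = x^N - x] with [N = q^k] and [g x = (T x + delta)^t].  Since
   [x -> x^N] is an additive involution, [T] is additive and [T (g x) = 0]:
   indeed [(T x + delta)^N = -(T x + delta)] and [t] is even.  As the
   coefficients of [L] are fixed by [x -> x^N], [L] commutes with [T].
   If [L] is injective, applying [T] to [f x = f z] gives [L (T x) = L (T z)],
   hence [T x = T z], hence [g x = g z] and [L x = L z].  Conversely, a nonzero
   [u] in the kernel of [L] yields a collision [f (x + w) = f x]: take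
   [w = u + u^N] when it is nonzero (then [T w = 0]); otherwise [u^N = -u] and
   [w = u] with [x = 0] in characteristic 2, or [x = (delta - u) / 2], for
   which [T x + delta = u] and [T (x + u) + delta = -u]. *)
From mathcomp Require Import all_boot all_order all_algebra all_field.
From mathcomp Require Import ring.

Set Implicit Arguments.
Unset Strict Implicit.
Unset Printing Implicit Defensive.
Import GRing.Theory.
Local Open Scope ring_scope.

Definition frob_diff {R : nzRingType} (N : nat) (x : R) : R := x ^+ N - x.

Section QPolynomial.

Variables (R : comNzRingType) (q : nat).
Hypothesis pcharq : [pchar R].-nat q.

Lemma pchar_natX m : [pchar R].-nat (q ^ m)%N.
Proof. by rewrite pnatX pcharq. Qed.

Lemma qpoly_evalD (a : seq R) x y :
  qpoly_eval q a (x + y) = qpoly_eval q a x + qpoly_eval q a y.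
Proof.
rewrite /qpoly_eval -big_split; apply: eq_bigr => i _.
by rewrite exprDn_pchar ?pchar_natX // mulrDr.
Qed.

Lemma qpoly_evalN (a : seq R) x : qpoly_eval q a (- x) = - qpoly_eval q a x.
Proof.
rewrite /qpoly_eval -sumrN; apply: eq_bigr => i _.
by rewrite exprNn_pchar ?pchar_natX // mulrN.
Qed.

Lemma qpoly_evalB (a : seq R) x y :
  qpoly_eval q a (x - y) = qpoly_eval q a x - qpoly_eval q a y.
Proof. by rewrite qpoly_evalD qpoly_evalN. Qed.

Variable N : nat.
Hypothesis pcharN : [pchar R].-nat N.

Lemma frob_diffD (x y : R) : frob_diff N (x + y) = frob_diff N x + frob_diff N y.
Proof. by rewrite /frob_diff exprDn_pchar //; ring. Qed.

Lemma qpoly_evalXn (a : seq R) x : all (fun c => c ^+ N == c) a ->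
  qpoly_eval q a (x ^+ N) = qpoly_eval q a x ^+ N.
Proof.
move=> aN; have /andP[N_gt0 _] := pcharN.
have frobD (y z : R) : (y + z) ^+ N = y ^+ N + z ^+ N := exprDn_pchar y z pcharN.
rewrite /qpoly_eval (big_morph _ frobD (expr0n _ _)) eqn0Ngt N_gt0 /=.
apply: eq_bigr => i _.
by rewrite exprMn (eqP (allP aN _ (mem_nth 0 (ltn_ord i)))) -!exprM mulnC.
Qed.

Lemma qpoly_eval_frob_diff (a : seq R) x : all (fun c => c ^+ N == c) a ->
  qpoly_eval q a (frob_diff N x) = frob_diff N (qpoly_eval q a x).
Proof. by move=> aN; rewrite /frob_diff qpoly_evalB qpoly_evalXn. Qed.

End QPolynomial.

Section PerturbedQPolynomial.

Variables (F : fieldType) (q N t : nat) (delta : F) (a : seq F).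
Hypotheses (pcharq : [pchar F].-nat q) (pcharN : [pchar F].-nat N).
Hypothesis frobK : forall x : F, x ^+ N ^+ N = x.
Hypothesis delta_anti : delta ^+ N = - delta.
Hypothesis t_even : ~~ odd t.
Hypothesis aN : all (fun c => c ^+ N == c) a.

Let L := qpoly_eval q a.
Let g x := (frob_diff N x + delta) ^+ t.
Let f x := g x + L x.
Let frobD (x y : F) : (x + y) ^+ N = x ^+ N + y ^+ N := exprDn_pchar x y pcharN.
Let frobN (x : F) : (- x) ^+ N = - x ^+ N := exprNn_pchar x pcharN.

Lemma exprN_even (y : F) : (- y) ^+ t = y ^+ t.
Proof. by rewrite exprNn -signr_odd (negbTE t_even) mul1r. Qed.

Lemma frob_diff_anti (y : F) : y ^+ N = - y -> frob_diff N y = - (y *+ 2).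
Proof. by move=> yN; rewrite /frob_diff yN mulr2n opprD. Qed.

Lemma frob_diff_fixed (y : F) : y ^+ N = y -> frob_diff N y = 0.
Proof. by move=> yN; rewrite /frob_diff yN subrr. Qed.

Lemma frob_diff_perturbation_eq0 x : frob_diff N (g x) = 0.
Proof.
apply: frob_diff_fixed; rewrite /g -exprM mulnC exprM.
rewrite /frob_diff !frobD frobN frobK delta_anti -exprN_even.
by congr (_ ^+ t); ring.
Qed.

Lemma perturbed_injective : injective L -> injective f.
Proof.
move=> Linj x z fxz.
have Txz : frob_diff N x = frob_diff N z.
  apply: Linj; rewrite /L !qpoly_eval_frob_diff //.
  move: (congr1 (frob_diff N) fxz).
  by rewrite /f !frob_diffD // !frob_diff_perturbation_eq0 !add0r.
by apply: Linj; move: fxz; rewrite /f /g Txz => /addrI.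
Qed.

Lemma perturbed_collision x w : L w = 0 -> g (x + w) = g x -> f (x + w) = f x.
Proof. by move=> Lw gxw; rewrite /f gxw /L qpoly_evalD // -/L Lw addr0. Qed.

Lemma perturbed_collision_exists u : u != 0 -> L u = 0 ->
  exists x w, [/\ w != 0, L w = 0 & g (x + w) = g x].
Proof.
move=> u_neq0 Lu; have /andP[N_gt0 _] := pcharN.
have [uN | w_neq0] := eqVneq (u + u ^+ N) 0; last first.
  exists 0, (u + u ^+ N); split => //.
    by rewrite /L qpoly_evalD // qpoly_evalXn // -/L Lu expr0n eqn0Ngt N_gt0 addr0.
  rewrite /g frob_diffD // (@frob_diff_fixed (u + u ^+ N)) ?addr0 //.
  by rewrite frobD frobK addrC.
have {}uN : u ^+ N = - u by apply/eqP; rewrite -addr_eq0 addrC uN.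
have Tu : frob_diff N u = - (u *+ 2) by rewrite frob_diff_anti.
have [two0 | two_neq0] := eqVneq (2 : F) 0.
  exists 0, u; split => //.
  by rewrite /g frob_diffD // Tu -mulr_natr two0 mulr0 oppr0 addr0.
have Tx : frob_diff N ((delta - u) / 2) = u - delta.
  rewrite frob_diff_anti; first by rewrite -mulr_natr; field.
  by rewrite exprMn exprVn frobD frobN delta_anti uN frobD expr1n -opprD mulNr.
exists ((delta - u) / 2), u; split => //.
by rewrite /g frob_diffD // Tx Tu -exprN_even; congr (_ ^+ t); ring.
Qed.

Lemma injective_of_perturbed : injective f -> injective L.
Proof.
move=> finj x z Lxz; apply/eqP; rewrite -subr_eq0; apply/negPn/negP => u_neq0.
have Lu : L (x - z) = 0 by rewrite /L qpoly_evalB // -/L Lxz subrr.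
have [y [w [w_neq0 Lw gyw]]] := perturbed_collision_exists u_neq0 Lu.
have := finj _ _ (perturbed_collision Lw gyw).
by rewrite -{2}[y]addr0 => /addrI w0; rewrite w0 eqxx in w_neq0.
Qed.

End PerturbedQPolynomial.

Lemma pchar_nat_prime_power (F : finFieldType) q m :
  prime_power q -> #|F| = (q ^ m)%N -> [pchar F].-nat q.
Proof.
case=> p [e [p_pr [_ ->]]] cardF.
have pF : p \in [pchar F] by apply: (@card_finPcharP _ _ (e * m)); rewrite ?cardF ?expnM.
by rewrite (eq_pnat _ (pcharf_eq pF)) pnatX pnat_id.
Qed.

Lemma expf_sqrt_card_id (F : finFieldType) N (x : F) :
  #|F| = (N * N)%N -> x ^+ N ^+ N = x.
Proof. by move=> cardF; rewrite -exprM -cardF expf_card. Qed.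

Theorem mainTheorem3 (F : finFieldType) (q k t : nat) (delta : F) (a : seq F) :
  prime_power q -> (0 < k)%N -> #|F| = (q ^ (2 * k))%N -> ~~ odd t ->
  delta ^+ (q ^ k) = - delta ->
  all (fun c => c ^+ (q ^ k) == c) a ->
  (is_perm_map (fun x : F => (x ^+ (q ^ k) - x + delta) ^+ t + qpoly_eval q a x)
   <-> is_perm_map (fun x : F => qpoly_eval q a x)).
Proof.
move=> qpp _ cardF t_even delta_anti aN.
have pcharq := pchar_nat_prime_power qpp cardF.
have frobK (x : F) : x ^+ (q ^ k) ^+ (q ^ k) = x.
  by apply: expf_sqrt_card_id; rewrite cardF -expnD addnn -mul2n.
have pcharN := pchar_natX pcharq k.
split=> /bij_inj inj; apply: injF_bij.
- exact (injective_of_perturbed pcharq pcharN frobK delta_anti t_even aN inj).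
- exact (perturbed_injective pcharq pcharN frobK delta_anti t_even aN inj).
Qed.
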